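(* For all $n\ge 1$, $\left|\mathrm{Av}_n[\overline{13}42]\right|=D_{n+1}$, where $D_1=2$, $D_2=1$, $D_3=1$ and $D_n=\sum_{k=1}^{n-3}D_kD_{n-k}$ for $n\ge 4$.
   Context: For $\sigma\in S_n$, the cyclic permutation $[\sigma]$ is the set of all rotations of $\sigma$; $[S_n]$ is the set of cyclic permutations of length $n$. $[\sigma]$ contains the vincular pattern $[\overline{13}42]$ if some rotation of $\sigma$ has entries $a,b,c,d$ appearing in this order with $a,b$ adjacent and $a<d<b<c$; $\mathrm{Av}_n[\overline{13}42]$ is the set of $[\sigma]\in[S_n]$ not containing it. *)

From mathcomp Require Import all_boot all_fingroup.
Set Implicit Arguments. Unset Strict Implicit. Unset Printing Implicit Defensive.

(* One-line notation of sigma in S_n, with values 0..n-1 (order-isomorphic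
   to the usual 1..n). *)
Definition word n (s : 'S_n) : seq nat := [seq nat_of_ord (s i) | i <- enum 'I_n].

(* The linear word w contains the vincular pattern 13-4-2 with 1,3 adjacent:
   positions i < i+1 < k < l with w_i < w_l < w_(i+1) < w_k. *)
Definition contains_13_42 (w : seq nat) : bool :=
  [exists i : 'I_(size w), exists k : 'I_(size w), exists l : 'I_(size w),
     [&& i.+1 < k, k < l &
       [&& nth 0 w i < nth 0 w l, nth 0 w l < nth 0 w i.+1
         & nth 0 w i.+1 < nth 0 w k]]].

Definition cyc n (s : 'S_n) : {set 'S_n} :=
  [set t : 'S_n | [exists r : 'I_n, word t == rot r (word s)]].

Definition cyc_contains n (s : 'S_n) : bool :=
  [exists t in cyc s, contains_13_42 (word t)].

Definition Av n : {set {set 'S_n}} :=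
  [set cyc s | s : 'S_n & ~~ cyc_contains s].

(* Every cyclic class contains exactly one rotation starting with its minimum 0, so
   |Av_n[13-42]| = a_n, the number of words 0 :: w on {0..n-1} avoiding the pattern
   cyclically.  Let y be the letter after 0.  If y = 1, the pattern cannot use 0, and
   deleting 0 leaves an avoider on {1..n-1} starting with its minimum.  If y > 1, an
   occurrence starting at 0 exists unless the rest of the word is L ++ H with
   L < y < H; then 0 y L H avoids iff y :: L and H both avoid and H starts with its
   maximum (otherwise last L, head H, a larger letter of H and y form the pattern).
   Counting avoiders that start with their maximum is the same as counting those that
   start with their minimum (rotate), so with a_0 = 1
     a_n = a_(n-1) + sum_(2 <= y < n) a_y a_(n-1-y),
   which is the recurrence of D shifted by one index. *)

From mathcomp Require Import all_boot all_fingroup zify.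
Set Implicit Arguments. Unset Strict Implicit. Unset Printing Implicit Defensive.

Section SeqLemmas.
Variable T : eqType.
Implicit Types (s p q : seq T) (P : pred T).

Lemma filter_in_all P s : {in s, forall x, P x} -> filter P s = s.
Proof. by move=> h; apply/all_filterP/allP. Qed.

Lemma filter_in_none P s : {in s, forall x, ~~ P x} -> filter P s = [::].
Proof. by move=> h; rewrite -(filter_pred0 s); apply: eq_in_filter => x /h /negbTE. Qed.

Lemma subseq_cons_catr (x : T) s p q : x \notin p ->
  subseq (x :: s) (p ++ q) -> subseq (x :: s) q.
Proof.
by elim: p => [//|z p IHp]; rewrite inE negb_or => /andP [/negbTE /= -> /IHp].
Qed.

Lemma subseq_pairP (x0 c d : T) s : reflect
  (exists i j, [/\ i < j < size s, nth x0 s i = c & nth x0 s j = d])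
  (subseq [:: c; d] s).
Proof.
apply: (iffP idP) => [|[i [j [/andP [ij js] ei ej]]]].
  elim: s => [//|x s IHs] /=; case: eqP => [<- | _].
    rewrite sub1seq => ds; exists 0, (index d s).+1.
    by split; rewrite /= ?ltnS ?index_mem ?nth_index.
  by move=> /IHs [i [j [ij <- <-]]]; exists i.+1, j.+1.
have is_ : i < size s by apply: ltn_trans js.
have ds : d \in drop i.+1 s.
  rewrite -ej -(subnKC ij) -nth_drop mem_nth // size_drop.
  exact: ltn_sub2r (leq_ltn_trans ij js) js.
rewrite -(cat_take_drop i s) (drop_nth x0 is_) ei -[[:: _; _]]cat0s.
by apply: cat_subseq (sub0seq _) _; rewrite /= eqxx sub1seq.
Qed.

Lemma rot_head_eq (x0 : T) k s : uniq s -> head x0 (rot k s) = head x0 s -> rot k s = s.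
Proof.
move=> us; case: (ltnP k (size s)) => [ks hd | /rot_oversize -> //].
suff -> : k = 0 by rewrite rot0.
move: hd; rewrite /rot (drop_nth x0 ks) /= -nth0 => /eqP.
by rewrite nth_uniq // => [/eqP | ]; last exact: leq_ltn_trans ks.
Qed.

Lemma extremal_rot_eq (x0 : T) (r : rel T) k s : antisymmetric r -> uniq s ->
  all (r (head x0 s)) s -> all (r (head x0 (rot k s))) (rot k s) -> rot k s = s.
Proof.
move=> anti_r us /allP ext_s /allP ext_r; apply: (rot_head_eq (x0 := x0)) => //.
case: s us ext_s ext_r => [|x s] us ext_s ext_r; first by rewrite /rot.
have head_r : head x0 (rot k (x :: s)) \in x :: s.
  by rewrite -(mem_rot k) -nth0 mem_nth // size_rot.
by apply: anti_r; rewrite ext_r ?ext_s // mem_rot inE eqxx.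
Qed.

End SeqLemmas.

Lemma cat_adj_head (t : nat) W1 W2 p x z q : W1 ++ W2 = p ++ x :: z :: q ->
  {in W1, forall u, u < t} -> {in W2, forall u, t <= u} -> x < t -> t <= z ->
  W2 = z :: behead W2.
Proof.
elim: p W1 => [|u p IH] [|v W1] /=.
- by move=> -> _ /(_ x); rewrite inE eqxx => /(_ isT); lia.
- case: W1 => [|w W1] /=; first by case=> _ ->.
  by case=> _ <- _ /(_ w); rewrite !inE eqxx orbT => /(_ isT); lia.
- move=> -> _ /(_ x); rewrite inE mem_cat inE eqxx !orbT => /(_ isT); lia.
- move=> [_ E] lt1; apply: (IH W1 E) => w wW1.
  by apply: lt1; rewrite inE wW1 orbT.
Qed.

Lemma uniq_size_bij (T U : eqType) (f : T -> U) (s : seq T) (s' : seq U) :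
  uniq s -> uniq s' -> {in s &, injective f} -> {in s, forall x, f x \in s'} ->
  {subset s' <= map f s} -> size s = size s'.
Proof.
move=> us us' f_inj f_in f_onto; rewrite -(size_map f); apply/eqP.
rewrite eqn_leq !uniq_leq_size ?map_inj_in_uniq // => u /mapP [x xs ->]; exact: f_in.
Qed.

Lemma sum_nat_eq1 v lo hi : lo <= v < hi -> \sum_(lo <= i < hi) (v == i) = 1.
Proof.
move=> v_in; rewrite (eq_bigr (fun i => if v == i then 1 else 0)) => [|i _]; last by case: eqP.
rewrite -big_mkcond sum1_count (eq_count (a2 := pred1 v)) => [|i]; last exact: eq_sym.
by rewrite count_uniq_mem ?iota_uniq // mem_index_iota v_in.
Qed.

Lemma size_sum_count (T : eqType) (s : seq T) (g : T -> nat) lo hi :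
  {in s, forall x, lo <= g x < hi} -> size s = \sum_(lo <= i < hi) count (fun x => g x == i) s.
Proof.
elim: s => [_|x s IHs g_in] /=; first by rewrite big1.
rewrite big_split /= sum_nat_eq1 ?g_in ?mem_head // IHs // => z zs.
by apply: g_in; rewrite inE zs orbT.
Qed.

Lemma perm_iotaP (w : seq nat) m k :
  reflect (uniq w /\ forall z, (z \in w) = (m <= z < m + k)) (perm_eq w (iota m k)).
Proof.
apply: (iffP idP) => [pw | [uw memw]].
  by split=> [|z]; rewrite ?(perm_uniq pw) ?(perm_mem pw) ?iota_uniq ?mem_iota.
by apply: uniq_perm; rewrite ?iota_uniq // => z; rewrite memw mem_iota.
Qed.

Lemma filter_iota_lt m t k : t <= k -> filter (fun x => x < m + t) (iota m k) = iota m t.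
Proof.
move=> t_k; rewrite -(subnKC t_k) iotaD filter_cat.
rewrite filter_in_all => [|x]; last by rewrite mem_iota => /andP [].
by rewrite filter_in_none ?cats0 // => x; rewrite mem_iota -leqNgt => /andP [].
Qed.

Lemma filter_iota_ge m t k : t <= k ->
  filter (fun x => m + t <= x) (iota m k) = iota (m + t) (k - t).
Proof.
move=> t_k; rewrite -{1}(subnKC t_k) iotaD filter_cat.
rewrite filter_in_none => [|x]; last by rewrite mem_iota -ltnNge => /andP [].
by rewrite filter_in_all // => x; rewrite mem_iota => /andP [].
Qed.

Lemma perm_cat_iota m t k L H : t <= k ->
  {in L, forall x, x < m + t} -> {in H, forall x, m + t <= x} ->
  perm_eq (L ++ H) (iota m k) = perm_eq L (iota m t) && perm_eq H (iota (m + t) (k - t)).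
Proof.
move=> t_k lt_L ge_H; apply/idP/andP => [pw | [pL pH]]; last first.
  by rewrite -(subnKC t_k) iotaD perm_cat.
have eL : filter (fun x => x < m + t) (L ++ H) = L.
  by rewrite filter_cat filter_in_all // filter_in_none ?cats0 // => x /ge_H; rewrite -leqNgt.
have eH : filter (fun x => m + t <= x) (L ++ H) = H.
  by rewrite filter_cat filter_in_none ?filter_in_all // => x /lt_L; rewrite -ltnNge.
have := perm_filter (fun x => x < m + t) pw; rewrite eL filter_iota_lt // => ->.
by have := perm_filter (fun x => m + t <= x) pw; rewrite eH filter_iota_ge.
Qed.

Lemma size_filter_permutations_shift (P : pred (seq nat)) m k :
  size [seq w <- permutations (iota m k) | P w] =
  size [seq w <- permutations (iota 0 k) | P (map (addn m) w)].
Proof.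
have iota_shift : iota m k = map (addn m) (iota 0 k) by rewrite -iotaDl addn0.
symmetry; apply: (uniq_size_bij (f := map (addn m))); rewrite ?filter_uniq ?permutations_uniq //.
- by move=> w1 w2 _ _; apply: inj_map; apply: addnI.
- move=> w; rewrite !mem_filter !mem_permutations => /andP [Pw pw].
  by rewrite Pw iota_shift perm_map.
move=> v; rewrite mem_filter mem_permutations => /andP [Pv pv].
have vK : map (addn m) (map (subn^~ m) v) = v.
  rewrite -map_comp map_id_in // => x; rewrite (perm_mem pv) mem_iota /= => /andP [m_x _].
  exact: subnKC.
apply/mapP; exists (map (subn^~ m) v) => //.
rewrite mem_filter mem_permutations vK Pv /=.
have <- : map (subn^~ m) (iota m k) = iota 0 k.
  by rewrite iota_shift -map_comp map_id_in // => x _ /=; rewrite addKn.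
exact: perm_map.
Qed.

(** * Cyclic occurrences of the pattern *)

Section RotOcc.
Variable T : eqType.
Implicit Types (W X p q : seq T) (a b c d : T).

Definition rot_occ W a b c d :=
  exists k X, rot k W = a :: b :: X /\ subseq [:: c; d] X.

Lemma rot_occP W a b c d : rot_occ W a b c d <->
  (exists p q, W = p ++ a :: b :: q /\ subseq [:: c; d] (q ++ p)) \/
  (exists X, W = b :: rcons X a /\ subseq [:: c; d] X).
Proof.
split=> [[k [X [+ S]]] | [[p [q [-> S]]] | [X [-> S]]]].
- rewrite /rot; case eD: (drop k W) => [|z1 [|z2 Z]] /= E.
  + have hk : size W <= k by rewrite -subn_eq0 -size_drop eD.
    by left; exists [::], X; rewrite cats0 -E take_oversize.
  + case: E eD => -> EX eD; right; exists X; split=> //.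
    by rewrite -(cat_take_drop k W) eD EX cats1.
  + case: E eD => -> -> EX eD; left; exists (take k W), Z.
    by rewrite EX -{1}(cat_take_drop k W) eD.
- by exists (size p), (q ++ p); rewrite rot_size_cat.
- by exists (size (b :: X)), X; rewrite -cats1 -cat_cons rot_size_cat.
Qed.

Lemma rot_occ_rot j W a b c d : rot_occ (rot j W) a b c d <-> rot_occ W a b c d.
Proof.
have rot_occ_unrot i V : rot_occ (rot i V) a b c d -> rot_occ V a b c d.
  by move=> [k [X]]; rewrite rot_rot_add => -[E S]; exists (rot_add V i k), X.
split; first exact: rot_occ_unrot.
move=> occW; apply: (@rot_occ_unrot (size W - j)).
by rewrite -(size_rot j) -/(rotr j (rot j W)) rotK.
Qed.

Lemma rot_occ_mem W a b c d : rot_occ W a b c d ->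
  [/\ a \in W, b \in W, c \in W & d \in W].
Proof.
move=> [k [X [E S]]].
have memW x : x \in [:: a, b & X] -> x \in W by rewrite -E mem_rot.
have memX x : x \in [:: c; d] -> x \in W.
  by move=> /(mem_subseq S) xX; apply: memW; rewrite !inE xX !orbT.
by split; [apply: memW | apply: memW | apply: memX | apply: memX]; rewrite !inE eqxx ?orbT.
Qed.

Lemma rot_occ_filter (P : pred T) W a b c d : rot_occ W a b c d ->
  P a -> P b -> P c -> P d -> rot_occ (filter P W) a b c d.
Proof.
move=> /rot_occP [[p [q [-> S]]] | [X [-> S]]] Pa Pb Pc Pd; apply/rot_occP.
- left; exists (filter P p), (filter P q).
  by rewrite filter_cat /= Pa Pb -filter_cat subseq_filter /= Pc Pd S.
- right; exists (filter P X).
  by rewrite /= filter_rcons Pa Pb subseq_filter /= Pc Pd S.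
Qed.

Lemma rot_occ_head W a x q b c d : uniq W -> W = a :: x :: q ->
  rot_occ W a b c d -> b = x /\ subseq [:: c; d] q.
Proof.
move=> uW EW /rot_occP [[[|y p] [q' [E S]]] | [X [E S]]].
- by move: E S; rewrite EW cats0 => -[-> ->].
- have ya : y = a by move: E; rewrite EW => -[].
  by move: uW; rewrite E ya /= mem_cat inE eqxx orbT.
- have ba : b = a by move: E; rewrite EW => -[].
  by move: uW; rewrite E ba /= mem_rcons inE eqxx.
Qed.

End RotOcc.

Lemma rot_occ_map (T U : eqType) (f : T -> U) (W : seq T) (a b c d : T) :
  rot_occ W a b c d -> rot_occ (map f W) (f a) (f b) (f c) (f d).
Proof.
move=> /rot_occP [[p [q [-> S]]] | [X [-> S]]]; apply/rot_occP.
- left; exists (map f p), (map f q).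
  by rewrite map_cat; split=> //; rewrite -map_cat; exact: (map_subseq f S).
- by right; exists (map f X); rewrite /= map_rcons; split=> //; exact: (map_subseq f S).
Qed.

Implicit Types (W X p q : seq nat) (a b c d : nat).

(* [a], [b], [c], [d] play the roles of 1, 3, 4, 2. *)
Definition pat13_42 a b c d := [&& a < d, d < b & b < c].

Definition cyc_occ W := exists a b c d, rot_occ W a b c d /\ pat13_42 a b c d.

Lemma cyc_occ_rot j W : cyc_occ (rot j W) <-> cyc_occ W.
Proof.
by split=> -[a [b [c [d [occ p]]]]]; exists a, b, c, d; rewrite rot_occ_rot in occ *.
Qed.

Lemma cyc_occ_size W : cyc_occ W -> 4 <= size W.
Proof.
move=> [a [b [c [d [[k [X [E S]]] _]]]]].
by rewrite -(size_rot k) E /= !ltnS (size_subseq S).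
Qed.

Lemma cyc_occ_map (f : nat -> nat) W : {in W &, forall x y, (f x < f y) = (x < y)} ->
  cyc_occ W -> cyc_occ (map f W).
Proof.
move=> mono [a [b [c [d [occ pat]]]]]; have [aW bW cW dW] := rot_occ_mem occ.
exists (f a), (f b), (f c), (f d); split; first exact: rot_occ_map.
by rewrite /pat13_42 !mono.
Qed.

Definition min_first W := all (fun x => head 0 W <= x) W.

Definition max_first W := all (fun x => x <= head 0 W) W.

Lemma max_firstPn W : reflect (exists2 c, c \in W & head 0 W < c) (~~ max_first W).
Proof.
rewrite /max_first -has_predC.
by apply: (iffP hasP) => -[c cW hc]; exists c => //=; rewrite ltnNge in hc *.
Qed.

Lemma min_first_shift m W : min_first (map (addn m) W) = min_first W.
Proof.
case: W => // x W; rewrite /min_first /= !leqnn all_map.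
by apply: eq_all => z /=; rewrite leq_add2l.
Qed.

Lemma max_first_shift m W : max_first (map (addn m) W) = max_first W.
Proof.
case: W => // x W; rewrite /max_first /= !leqnn all_map.
by apply: eq_all => z /=; rewrite leq_add2l.
Qed.

Lemma min_first_rot_eq k W : uniq W -> min_first W -> min_first (rot k W) -> rot k W = W.
Proof. exact: (extremal_rot_eq (r := leq) anti_leq). Qed.

Lemma max_first_rot_eq k W : uniq W -> max_first W -> max_first (rot k W) -> rot k W = W.
Proof.
apply: (extremal_rot_eq (r := fun h x => x <= h)) => x y /andP [yx xy].
by apply: anti_leq; rewrite xy yx.
Qed.

Definition straddling_inv y V := exists c d, subseq [:: c; d] V /\ d < y < c.

Lemma cyc_occ_cons_min m y V : uniq (m :: y :: V) -> {in y :: V, forall x, m < x} ->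
  cyc_occ (m :: y :: V) <-> cyc_occ (y :: V) \/ straddling_inv y V.
Proof.
move=> uW gt_m; split=> [[a [b [c [d [occ pat]]]]] | ].
  have [aW _ _ _] := rot_occ_mem occ.
  case: (eqVneq a m) occ pat aW => [-> | a_m] occ pat aW.
    have [yb S] := rot_occ_head uW (erefl _) occ.
    by right; exists c, d; split=> //; move: pat; rewrite /pat13_42 yb; lia.
  have m_a : m < a by apply: gt_m; rewrite in_cons (negbTE a_m) in aW.
  have <- : filter (predC1 m) (m :: y :: V) = y :: V by rewrite -rem_filter //= eqxx.
  left; exists a, b, c, d; split=> //.
  by apply: rot_occ_filter occ _ _ _ _ => /=; apply/eqP; move: pat; rewrite /pat13_42; lia.
have straddle : straddling_inv y V -> cyc_occ (m :: y :: V).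
  move=> [c [d [S dyc]]].
  have m_d : m < d by apply: gt_m; rewrite inE (mem_subseq S) ?orbT // !inE eqxx orbT.
  exists m, y, c, d; split; last by rewrite /pat13_42; lia.
  by apply/rot_occP; left; exists [::], V; rewrite cats0.
case=> [[a [b [c [d [/rot_occP occ pat]]]]] | /straddle //].
case: occ => [[p [q [E S]]] | [X [[yb VX] S]]].
  exists a, b, c, d; split=> //; apply/rot_occP; left; exists (m :: p), q; rewrite E.
  by split=> //; apply: subseq_trans S _; apply: cat_subseq (subseq_cons p m).
apply: straddle; exists c, d; split; first by rewrite VX; apply: subseq_trans S (subseq_rcons X a).
by move: pat; rewrite /pat13_42 yb; lia.
Qed.

Lemma cyc_occ_cons_min_inv m V : uniq (m :: V) -> {in V, forall x, m < x} ->
  cyc_occ (m :: V) -> cyc_occ V \/ ~~ max_first V.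
Proof.
case: V => [_ _ /cyc_occ_size // | h V] uW gt_m.
move/(cyc_occ_cons_min uW gt_m) => [|[c [d [S /andP [_ hc]]]]]; first by left.
by right; apply/max_firstPn; exists c; rewrite //= inE (mem_subseq S) ?orbT // inE eqxx.
Qed.

Section SplitWord.
Variables (y : nat) (L H : seq nat).
Hypotheses (uW : uniq (y :: L ++ H)) (lt_L : {in L, forall x, x < y})
  (gt_H : {in H, forall x, y < x}).

Let W := y :: L ++ H.

Lemma mem_split_gt x : x \in W -> y < x -> x \in H.
Proof.
rewrite inE mem_cat => /or3P [/eqP -> | /lt_L | //]; lia.
Qed.

Lemma filter_split_le : filter (fun x => x <= y) W = y :: L.
Proof.
rewrite /= leqnn filter_cat filter_in_all => [|x /lt_L]; last lia.
by rewrite filter_in_none ?cats0 // => x /gt_H; lia.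
Qed.

Lemma filter_split_ge : filter (fun x => y <= x) W = y :: H.
Proof.
rewrite /= leqnn filter_cat filter_in_none => [|x /lt_L]; last lia.
by rewrite filter_in_all // => x /gt_H; lia.
Qed.

Lemma filter_split_gt : filter (fun x => y < x) W = H.
Proof.
rewrite /= ltnn filter_cat filter_in_none => [|x /lt_L]; last lia.
by rewrite filter_in_all // => x /gt_H.
Qed.

Lemma filter_split_lt_or c : c \in H ->
  filter (fun x => (x < y) || (x == c)) W = L ++ [:: c].
Proof.
move=> cH; have y_c := gt_H cH.
have uH : uniq H by move: uW; rewrite /= cat_uniq => /and4P [].
rewrite /= ltnn (ltn_eqF y_c) filter_cat filter_in_all => [|x /lt_L -> //].
congr (_ ++ _); rewrite -(filter_pred1_uniq uH cH).
by apply: eq_in_filter => x /gt_H x_y /=; rewrite ltnNge ltnW.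
Qed.

Lemma rot_occ_split_low a b c d : rot_occ W a b c d -> pat13_42 a b c d -> b < y ->
  cyc_occ (y :: L).
Proof.
move=> occ pat b_y; have [_ _ cW _] := rot_occ_mem occ.
case: (leqP c y) => [c_y | y_c].
  exists a, b, c, d; rewrite -filter_split_le; split=> //.
  by apply: rot_occ_filter occ _ _ _ _ => /=; move: pat; rewrite /pat13_42; lia.
have cH := mem_split_gt cW y_c.
move: pat; rewrite /pat13_42 => /and3P [a_d d_b b_c].
have occ1 : rot_occ (L ++ [:: c]) a b c d.
  rewrite -filter_split_lt_or //.
  by apply: rot_occ_filter occ _ _ _ _; rewrite /= ?eqxx ?orbT //; apply/orP; left; lia.
(* Renaming [c] to [y] keeps the pattern and turns [L ++ [:: c]] into a rotation of [y :: L]. *)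
pose f x := if x == c then y else x.
have f_id x : x != c -> f x = x by rewrite /f => /negbTE ->.
have relabel : map f (L ++ [:: c]) = rot 1 (y :: L).
  rewrite rot1_cons -cats1 map_cat /= /f eqxx map_id_in // => x /lt_L x_y.
  by rewrite ifN // neq_ltn; lia.
have fc : f c = y by rewrite /f eqxx.
have [a_c b_c' d_c] : [/\ a != c, b != c & d != c] by split; apply/eqP; lia.
have := rot_occ_map f occ1; rewrite relabel rot_occ_rot fc !f_id // => occ2.
by exists a, b, y, d; split=> //; rewrite /pat13_42 a_d d_b b_y.
Qed.

Lemma rot_occ_split_straddle a b c d : rot_occ W a b c d -> pat13_42 a b c d ->
  a < y <= b -> ~~ max_first H.
Proof.
move=> occ pat /andP [a_y y_b]; have [_ _ cW _] := rot_occ_mem occ.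
have cH : c \in H by apply: (mem_split_gt cW); move: pat; rewrite /pat13_42; lia.
have [h [H' eH]] : exists h H', H = h :: H' by case: (H) cH => [|h H'] // _; exists h, H'.
apply/max_firstPn; exists c => //; rewrite eH /=.
suff <- : b = h by move: pat; rewrite /pat13_42; lia.
move: occ; rewrite -(rot_occ_rot 1) rot1_cons -cats1 -catA.
case/rot_occP => [[p [q [E _]]] | [X [E _]]].
  have ge_Hy u : u \in H ++ [:: y] -> y <= u.
    by rewrite mem_cat inE => /orP [/gt_H /ltnW | /eqP ->].
  by have := cat_adj_head E lt_L ge_Hy a_y y_b; rewrite eH => -[].
by have := congr1 (last 0) E; rewrite !last_cat /= last_rcons; lia.
Qed.

Lemma cyc_occ_split_inv : cyc_occ W -> [\/ cyc_occ (y :: L), ~~ max_first H | cyc_occ H].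
Proof.
move=> [a [b [c [d [occ pat]]]]].
have pat_filter (P : pred nat) : P a -> P b -> P c -> P d -> rot_occ (filter P W) a b c d.
  exact: rot_occ_filter.
case: (ltngtP a y) => [a_y | y_a | a_y].
- case: (ltnP b y) => [b_y | y_b].
    by apply: Or31; apply: rot_occ_split_low occ pat b_y.
  by apply: Or32; apply: rot_occ_split_straddle occ pat _; rewrite a_y y_b.
- apply: Or33; exists a, b, c, d; rewrite -filter_split_gt; split=> //.
  by apply: pat_filter => /=; move: pat; rewrite /pat13_42; lia.
- have uyH : uniq (y :: H) by rewrite -filter_split_ge filter_uniq.
  have : cyc_occ (y :: H).
    exists a, b, c, d; rewrite -filter_split_ge; split=> //.
    by apply: pat_filter => /=; move: pat; rewrite /pat13_42; lia.
  by case/(cyc_occ_cons_min_inv uyH gt_H); [apply: Or33 | apply: Or32].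
Qed.

Lemma cyc_occ_split_junction : L != [::] -> ~~ max_first H -> cyc_occ W.
Proof.
move=> nL /max_firstPn [c cH h_c].
have [h [H' eH]] : exists h H', H = h :: H' by case: (H) cH => [|h H'] // _; exists h, H'.
have [L' [l eL]] : exists L' l, L = rcons L' l.
  by case/lastP: (L) nL => [|L' l] // _; exists L', l.
have lL : l \in L by rewrite eL mem_rcons inE eqxx.
have hH : h \in H by rewrite eH inE eqxx.
rewrite eH /= in cH h_c; have cH' : c \in H' by move: cH; rewrite inE gtn_eqF.
exists l, h, c, y; split; last by have := lt_L lL; have := gt_H hH; rewrite /pat13_42; lia.
apply/rot_occP; left; exists (y :: L'), H'.
split; first by rewrite /W eL eH cat_rcons.
by rewrite -[[:: c; y]]/([:: c] ++ [:: y]); apply: cat_subseq; rewrite sub1seq // inE eqxx.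
Qed.

Lemma cyc_occ_split_low : cyc_occ (y :: L) -> cyc_occ W.
Proof.
move=> [a [b [c [d [/rot_occP occ pat]]]]].
case: occ => [[p [q [E S]]] | [X [[yb LX] S]]].
  exists a, b, c, d; split=> //; apply/rot_occP; left; exists p, (q ++ H).
  split; first by rewrite /W -cat_cons E -catA.
  by rewrite -catA; exact: subseq_trans S (cat_subseq (subseq_refl q) (suffix_subseq H p)).
have : c < y by apply: lt_L; rewrite LX mem_rcons inE (mem_subseq S) ?orbT // inE eqxx.
by move: pat; rewrite /pat13_42 yb; lia.
Qed.

Lemma cyc_occ_split_high : L != [::] -> cyc_occ H -> cyc_occ W.
Proof.
move=> nL [a [b [c [d [/rot_occP occ pat]]]]].
case: occ => [[p [q [E S]]] | [X [EH S]]].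
  exists a, b, c, d; split=> //; apply/rot_occP; left; exists (y :: L ++ p), q.
  split; first by rewrite /W E catA.
  exact: subseq_trans S (cat_subseq (subseq_refl q) (suffix_subseq (y :: L) p)).
apply: cyc_occ_split_junction nL _; apply/max_firstPn; exists c.
  by rewrite EH inE mem_rcons inE (mem_subseq S) ?orbT // inE eqxx.
by rewrite EH /=; move: pat; rewrite /pat13_42; lia.
Qed.

Lemma cyc_occ_split : L != [::] ->
  cyc_occ W <-> [\/ cyc_occ (y :: L), ~~ max_first H | cyc_occ H].
Proof.
move=> nL; split; first exact: cyc_occ_split_inv.
case; [exact: cyc_occ_split_low | exact: cyc_occ_split_junction | exact: cyc_occ_split_high].
Qed.

End SplitWord.

Lemma straddle_free_split y t : y \notin t -> ~ straddling_inv y t ->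
  t = filter (fun x => x < y) t ++ filter (fun x => y < x) t.
Proof.
elim: t => [//|x t IHt]; rewrite inE negb_or => /andP [y_x y_t] free.
have free_t : ~ straddling_inv y t.
  move=> [c [d [S dyc]]]; apply: free; exists c, d.
  by split=> //; apply: subseq_trans S (subseq_cons t x).
rewrite {1}(IHt y_t free_t).
case: (ltngtP x y) => [x_y | y_x' | x_y]; last by rewrite x_y eqxx in y_x.
  by rewrite /= x_y (ltnNge y x) (ltnW x_y).
have tL_nil : filter (fun x => x < y) t = [::].
  apply: filter_in_none => z zt; apply/negP => z_y; apply: free.
  by exists x, z; rewrite /= eqxx sub1seq zt z_y.
by rewrite /= tL_nil y_x' (ltnNge x y) (ltnW y_x').
Qed.

Lemma split_straddle_free y L H : {in L, forall x, x < y} -> {in H, forall x, y < x} ->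
  ~ straddling_inv y (L ++ H).
Proof.
move=> lt_L gt_H [c [d [S /andP [d_y y_c]]]].
have c_L : c \notin L by apply/negP => /lt_L; lia.
have /gt_H : d \in H by rewrite (mem_subseq (subseq_cons_catr c_L S)) // !inE eqxx orbT.
lia.
Qed.

Lemma cyc_occ_two_min m y t : uniq (m :: y :: t) -> m < y -> {in t, forall x, y < x} ->
  cyc_occ (m :: y :: t) <-> cyc_occ (y :: t).
Proof.
move=> uW m_y gt_t; have gt_m : {in y :: t, forall x, m < x}.
  by move=> x; rewrite inE => /orP [/eqP -> // | /gt_t]; lia.
rewrite (cyc_occ_cons_min uW gt_m); split=> [[//|[c [d [S /andP [d_y _]]]]] | ]; last by left.
have /gt_t : d \in t by rewrite (mem_subseq S) // !inE eqxx orbT.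
lia.
Qed.

Lemma cyc_occ_min_split m y L H : uniq (m :: y :: L ++ H) -> L != [::] ->
  {in L, forall x, m < x < y} -> {in H, forall x, y < x} ->
  cyc_occ (m :: y :: L ++ H) <-> [\/ cyc_occ (y :: L), ~~ max_first H | cyc_occ H].
Proof.
move=> uW nL mid_L gt_H.
have lt_L : {in L, forall x, x < y} by move=> x /mid_L /andP [].
have [x xL] : exists x, x \in L by case: (L) nL => [|x L'] // _; exists x; rewrite inE eqxx.
have gt_m : {in y :: L ++ H, forall x, m < x}.
  move=> z; rewrite inE mem_cat => /or3P [/eqP -> | /mid_L /andP [] // | /gt_H];
    have := mid_L x xL; lia.
rewrite (cyc_occ_cons_min uW gt_m) -(cyc_occ_split _ lt_L gt_H nL); last by case/andP: uW.
by split=> [[// | /(split_straddle_free lt_L gt_H)] | ]; [| left].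
Qed.

Lemma avoid_min_split m y t : uniq (m :: y :: t) -> {in y :: t, forall x, m < x} ->
  ~ cyc_occ (m :: y :: t) -> t = filter (fun x => x < y) t ++ filter (fun x => y < x) t.
Proof.
move=> uW gt_m avoid; apply: straddle_free_split; first by case/and3P: uW.
by move=> straddle; apply: avoid; apply/(cyc_occ_cons_min uW gt_m); right.
Qed.

(** * Linear occurrences and permutations *)

Lemma contains_13_42P w : contains_13_42 w <->
  exists a b c d i X, [/\ drop i w = a :: b :: X, subseq [:: c; d] X & pat13_42 a b c d].
Proof.
split.
  case/existsP => i /existsP [k /existsP [l /and3P [ik kl pat]]].
  have lw := ltn_ord l; have iw : i.+1 < size w by lia.
  exists (nth 0 w i), (nth 0 w i.+1), (nth 0 w k), (nth 0 w l), i, (drop i.+2 w).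
  split=> //; first by rewrite (drop_nth 0) ?(drop_nth 0 iw) //; lia.
  have il : i.+2 < l := leq_ltn_trans ik kl.
  apply/(subseq_pairP 0); exists (k - i.+2), (l - i.+2).
  rewrite !nth_drop (subnKC ik) (subnKC (ltnW il)) size_drop; split=> //.
  by rewrite (ltn_sub2r il kl) (ltn_sub2r (ltn_trans il lw) lw).
move=> [a [b [c [d [i [X [E /(subseq_pairP 0) [j1 [j2 [/andP [j12 j2X] <- <-]]] pat]]]]]]].
have nthE j : nth 0 w (i + j) = nth 0 (a :: b :: X) j by rewrite -E nth_drop.
have iw : i < size w by rewrite -subn_gt0 -size_drop E.
have sz : size w = i + (size X).+2 by rewrite -(subnKC (ltnW iw)) -size_drop E.
have kw : i + j1.+2 < size w by rewrite sz ltn_add2l !ltnS (ltn_trans j12 j2X).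
have lw : i + j2.+2 < size w by rewrite sz ltn_add2l !ltnS.
apply/existsP; exists (Ordinal iw); apply/existsP; exists (Ordinal kw).
apply/existsP; exists (Ordinal lw).
have wa : nth 0 w i = a by rewrite -[i]addn0 nthE.
have wb : nth 0 w i.+1 = b by rewrite -addn1 nthE.
by rewrite /= wa wb !nthE /=; apply/and3P; split=> //; lia.
Qed.

Definition cyc_occb W := has (fun k => contains_13_42 (rot k W)) (iota 0 (size W)).

Lemma cyc_occP W : reflect (cyc_occ W) (cyc_occb W).
Proof.
apply: (iffP hasP) => [[k _ /contains_13_42P [a [b [c [d [i [X [E S pat]]]]]]]] | ].
  exists a, b, c, d; split=> //; rewrite -(rot_occ_rot k).
  exists i, (X ++ take i (rot k W)); rewrite [rot i _]/rot E.
  by split=> //; apply: subseq_trans S (prefix_subseq X _).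
move=> [a [b [c [d [[k [X [E S]]] pat]]]]].
have W_gt0 : 0 < size W by rewrite -(size_rot k) E.
have [kW | Wk] := ltnP k (size W).
  exists k; first by rewrite mem_iota.
  by apply/contains_13_42P; exists a, b, c, d, 0, X; rewrite drop0 E.
exists 0; first by rewrite mem_iota.
by apply/contains_13_42P; exists a, b, c, d, 0, X; rewrite drop0 rot0 -(rot_oversize Wk) E.
Qed.

Lemma cyc_occb_rot k W : cyc_occb (rot k W) = cyc_occb W.
Proof. by apply/cyc_occP/cyc_occP; rewrite cyc_occ_rot. Qed.

Lemma cyc_occb_shift m W : cyc_occb (map (addn m) W) = cyc_occb W.
Proof.
apply/cyc_occP/cyc_occP; last by apply: cyc_occ_map => x y _ _; rewrite ltn_add2l.
move=> occ; have <- : map (subn^~ m) (map (addn m) W) = W.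
  by rewrite -map_comp map_id_in // => x _ /=; rewrite addKn.
by apply: cyc_occ_map occ => _ _ /mapP [x _ ->] /mapP [z _ ->]; rewrite !addKn ltn_add2l.
Qed.

Section Words.
Variable n : nat.

Lemma size_word (s : 'S_n) : size (word s) = n.
Proof. by rewrite size_map size_enum_ord. Qed.

Lemma nth_word (s : 'S_n) (i : 'I_n) : nth 0 (word s) i = s i.
Proof. by rewrite (nth_map i) ?size_enum_ord // nth_ord_enum. Qed.

Lemma word_uniq (s : 'S_n) : uniq (word s).
Proof. by rewrite map_inj_uniq ?enum_uniq // => i j /val_inj /perm_inj. Qed.

Lemma perm_word_iota (s : 'S_n) : perm_eq (word s) (iota 0 n).
Proof.
apply: uniq_perm; [exact: word_uniq | exact: iota_uniq | move=> x].
rewrite mem_iota add0n /=; apply/mapP/idP => [[i _ ->] // | x_n].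
by exists ((s^-1)%g (Ordinal x_n)); rewrite ?mem_enum // permKV.
Qed.

Lemma word_inj : injective (@word n).
Proof.
move=> s t e; apply/permP => i; apply: val_inj.
by rewrite /= -!nth_word e.
Qed.

Lemma word_surj w : perm_eq w (iota 0 n) -> exists s : 'S_n, word s = w.
Proof.
move=> pw; have size_w : size w = n by rewrite (perm_size pw) size_iota.
have w_lt (i : 'I_n) : nth 0 w i < n.
  have : nth 0 w i \in iota 0 n by rewrite -(perm_mem pw) mem_nth // size_w.
  by rewrite mem_iota.
have f_inj : injective (fun i => Ordinal (w_lt i)).
  move=> i j /(congr1 val) /= /eqP; rewrite nth_uniq ?size_w //; first by move/eqP/val_inj.
  by rewrite (perm_uniq pw) iota_uniq.
exists (perm f_inj); apply: (@eq_from_nth _ 0); first by rewrite size_word size_w.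
by move=> i; rewrite size_word => i_n; rewrite (nth_word _ (Ordinal i_n)) permE.
Qed.

Lemma cyc_containsE (s : 'S_n) : cyc_contains s = cyc_occb (word s).
Proof.
rewrite /cyc_occb size_word; apply/existsP/hasP => [[t /andP [t_s occ]] | [k k_n occ]].
  move: t_s; rewrite inE => /existsP [r /eqP wt].
  by exists (nat_of_ord r); rewrite -?wt // mem_iota add0n ltn_ord.
rewrite mem_iota add0n in k_n.
have [t wt] : exists t : 'S_n, word t = rot k (word s).
  by apply: word_surj; rewrite perm_rot perm_word_iota.
by exists t; rewrite wt occ andbT inE; apply/existsP; exists (Ordinal k_n); rewrite wt.
Qed.

End Words.

Lemma mem_cycP n (s t : 'S_n.+1) : t \in cyc s <-> exists k, word t = rot k (word s).
Proof.
rewrite inE; split=> [/existsP [r /eqP e] | [k e]]; first by exists r.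
apply/existsP; case: (ltnP k n.+1) => [k_n | n_k]; first by exists (Ordinal k_n); rewrite e.
by exists ord0; rewrite e rot_oversize ?rot0 // size_word.
Qed.

Lemma cyc_eq n (s t : 'S_n.+1) : t \in cyc s -> cyc t = cyc s.
Proof.
move/mem_cycP => [j ej]; apply/setP => u.
apply/idP/idP => /mem_cycP [k ek]; apply/mem_cycP.
  by rewrite ek ej rot_rot_add; eexists.
by rewrite ek -(rotK j (word s)) -ej /rotr rot_rot_add; eexists.
Qed.

Definition av_min m k := [seq w <- permutations (iota m k) | min_first w && ~~ cyc_occb w].

Definition av_max m k := [seq w <- permutations (iota m k) | max_first w && ~~ cyc_occb w].

Lemma card_Av n : #|Av n.+1| = size (av_min 0 n.+1).
Proof.
(* A class is determined by its unique rotation starting with 0. *)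
pose B := [set s : 'S_n.+1 | min_first (word s) && ~~ cyc_occb (word s)].
have AvE : Av n.+1 = (@cyc n.+1) @: B.
  apply/setP => C; apply/imsetP/imsetP => -[s + ->]; rewrite inE.
    rewrite cyc_containsE => avoid_s.
    have zero_s : 0 \in word s by rewrite (perm_mem (perm_word_iota s)).
    have [t wt] : exists t : 'S_n.+1, word t = rot (index 0 (word s)) (word s).
      by apply: word_surj; rewrite perm_rot perm_word_iota.
    have t_s : t \in cyc s by apply/mem_cycP; exists (index 0 (word s)).
    exists t; last by rewrite (cyc_eq t_s).
    by rewrite inE wt cyc_occb_rot avoid_s andbT rot_index //; apply/allP.
  by move=> /andP [_ avoid_s]; exists s; rewrite // inE cyc_containsE.
have cyc_inj : {in B &, injective (@cyc n.+1)}.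
  move=> s1 s2; rewrite !inE => /andP [min1 _] /andP [min2 _] e.
  have /mem_cycP [k ek] : s2 \in cyc s1 by rewrite e; apply/mem_cycP; exists 0; rewrite rot0.
  by apply: word_inj; rewrite ek (min_first_rot_eq (word_uniq s1)) // -ek.
rewrite AvE card_in_imset // cardE; apply: (uniq_size_bij (f := @word n.+1)).
- exact: enum_uniq.
- by rewrite filter_uniq // permutations_uniq.
- by move=> s1 s2 _ _; apply: word_inj.
- move=> s; rewrite mem_enum inE => /andP [min_s avoid_s].
  by rewrite mem_filter min_s avoid_s mem_permutations perm_word_iota.
- move=> w; rewrite mem_filter mem_permutations => /andP [/andP [min_w avoid_w] pw].
  have [t wt] := word_surj pw.
  by apply/mapP; exists t; rewrite // mem_enum inE wt min_w avoid_w.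
Qed.

(** * Counting cyclic avoiders *)

Lemma size_av_min_shift m k : size (av_min m k) = size (av_min 0 k).
Proof.
rewrite /av_min size_filter_permutations_shift; congr size.
by apply: eq_filter => w; rewrite min_first_shift cyc_occb_shift.
Qed.

Lemma size_av_max_shift m k : size (av_max m k) = size (av_max 0 k).
Proof.
rewrite /av_max size_filter_permutations_shift; congr size.
by apply: eq_filter => w; rewrite max_first_shift cyc_occb_shift.
Qed.

Lemma min_first_iota w m k : perm_eq w (iota m k.+1) -> min_first w = (head 0 w == m).
Proof.
move/perm_iotaP=> [_ memw]; case: w memw => [|x w] memw.
  by have := memw m; rewrite in_nil leqnn addnS ltnS leq_addr.
have [m_x _] : m <= x /\ x < m + k.+1 by apply/andP; rewrite -memw inE eqxx.
apply/allP/eqP => [minw | /= xm z]; last by rewrite memw xm => /andP [].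
by apply/anti_leq; rewrite m_x minw // memw leqnn addnS ltnS leq_addr.
Qed.

Lemma max_first_iota w m k : perm_eq w (iota m k.+1) -> max_first w = (head 0 w == m + k).
Proof.
move/perm_iotaP=> [_ memw]; case: w memw => [|x w] memw.
  by have := memw m; rewrite in_nil leqnn addnS ltnS leq_addr.
have [_ x_mk] : m <= x /\ x < m + k.+1 by apply/andP; rewrite -memw inE eqxx.
apply/allP/eqP => [maxw | /= xm z]; last by rewrite memw xm addnS ltnS => /andP [].
have x_mk' : x <= m + k by rewrite -ltnS -addnS.
by apply/anti_leq; rewrite x_mk' maxw // memw leq_addr addnS ltnS leqnn.
Qed.

Lemma max_first_iota_cons x m k : perm_eq x (iota m k.+1) -> max_first x ->
  x = (m + k) :: behead x /\ {in behead x, forall u, u < m + k}.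
Proof.
move=> px; rewrite (max_first_iota px) => /eqP hx.
have /perm_iotaP [ux memx] := px.
case: x hx px ux memx => [|u x]; first by move=> _ /perm_size; rewrite size_iota.
move=> /= -> _ /andP [mk_x _] memx; split=> // z zx.
have := memx z; rewrite inE zx orbT addnS ltnS => /esym /andP [_].
by rewrite leq_eqVlt => /orP [/eqP z_mk | //]; rewrite -z_mk zx in mk_x.
Qed.

Lemma size_av_max m k x : x \in av_max m k -> size x = k.
Proof. by rewrite mem_filter mem_permutations => /andP [_ /perm_size ->]; rewrite size_iota. Qed.

Lemma av_min_cons0 n w : w \in av_min 0 n.+1 -> w = 0 :: behead w.
Proof.
rewrite mem_filter mem_permutations => /andP [/andP [min_w _] pw].
move: min_w; rewrite (min_first_iota pw).
by case: w pw => [/perm_size | x w _ /= /eqP ->]; rewrite ?size_iota.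
Qed.

Lemma av_max_cons y x : 0 < y -> x \in av_max 1 y ->
  x = y :: behead x /\ {in behead x, forall u, u < y}.
Proof.
case: y => [//|y] _; rewrite mem_filter mem_permutations => /andP [/andP [max_x _] px].
by have := max_first_iota_cons px max_x; rewrite add1n.
Qed.

Lemma size_av_min_max k : size (av_min 0 k) = size (av_max 0 k).
Proof.
case: k => [// | k].
have rot_to x w : perm_eq w (iota 0 k.+1) -> x <= k ->
  perm_eq (rot (index x w) w) (iota 0 k.+1) /\ head 0 (rot (index x w) w) = x.
  by move=> pw x_k; rewrite perm_rot rot_index // (perm_mem pw) mem_iota.
apply: (uniq_size_bij (f := fun w => rot (index k w) w));
  rewrite ?filter_uniq ?permutations_uniq //.
- move=> w1 w2; rewrite !mem_filter !mem_permutations.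
  move=> /andP [/andP [min1 _] p1] /andP [/andP [min2 _] _] e.
  have u1 : uniq w1 by rewrite (perm_uniq p1) iota_uniq.
  move: (rotK (index k w2) w2); rewrite -e /rotr rot_rot_add => ew2.
  by rewrite -ew2 in min2 *; rewrite (min_first_rot_eq u1 min1 min2).
- move=> w; rewrite !mem_filter !mem_permutations => /andP [/andP [_ avoid_w] pw].
  have [pr hr] := rot_to k w pw (leqnn k).
  by rewrite (max_first_iota pr) hr add0n eqxx cyc_occb_rot avoid_w pr.
move=> v; rewrite mem_filter mem_permutations => /andP [/andP [max_v avoid_v] pv].
have [pr hr] := rot_to 0 v pv (leq0n k).
set w := rot (index 0 v) v in pr hr *.
have [pw hw] := rot_to k w pr (leqnn k).
apply/mapP; exists w.
  by rewrite mem_filter mem_permutations (min_first_iota pr) hr cyc_occb_rot avoid_v pr.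
have uv : uniq v by rewrite (perm_uniq pv) iota_uniq.
rewrite /w rot_rot_add (max_first_rot_eq uv) //.
by rewrite -rot_rot_add (max_first_iota pw) hw add0n.
Qed.

Lemma cyc_occb_two_min_iota n t : perm_eq (1 :: t) (iota 1 n) ->
  cyc_occb (0 :: 1 :: t) = cyc_occb (1 :: t).
Proof.
move/perm_iotaP => [u1t mem1t].
have gt1 : {in t, forall x, 1 < x}.
  have one_t : 1 \notin t by case/andP: u1t.
  move=> x xt; have := mem1t x; rewrite inE xt orbT => /esym /andP [x_ge1 _].
  by rewrite ltn_neqAle x_ge1 andbT; apply: contraNneq _ one_t => ->.
have u01t : uniq (0 :: 1 :: t).
  by rewrite cons_uniq u1t andbT inE /=; apply/negP => /gt1.
by apply/cyc_occP/cyc_occP; rewrite cyc_occ_two_min.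
Qed.

Lemma av_min_second_one n t : 1 < n ->
  (0 :: t \in av_min 0 n) && (head 0 t == 1) = (t \in av_min 1 n.-1).
Proof.
case: n => [//|n] n_gt0; rewrite !mem_filter !mem_permutations [iota 0 _]/= perm_cons.
case pt: (perm_eq t (iota 1 n)); last by rewrite !andbF.
case: n n_gt0 pt => [//|n] _ pt.
have -> : min_first (0 :: t) by apply/allP.
rewrite (min_first_iota pt) /= !andbT.
case: t pt => [|y t] pt; first by have := perm_size pt; rewrite size_iota.
case: (eqVneq y 1) pt => [-> pt | _ _]; last by rewrite !andbF.
by rewrite (cyc_occb_two_min_iota pt) andbC.
Qed.

Lemma av_min_second n y L H : 1 < y < n ->
  {in L, forall x, x < y} -> {in H, forall x, y < x} ->
  (0 :: y :: L ++ H \in av_min 0 n) = (y :: L \in av_max 1 y) && (H \in av_max y.+1 (n.-1 - y)).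
Proof.
case/andP=> y_gt1 y_n lt_L gt_H.
have perm_split : perm_eq (0 :: y :: L ++ H) (iota 0 n) =
    perm_eq (y :: L) (iota 1 y) && perm_eq H (iota y.+1 (n.-1 - y)).
  case: n y_n => [//|n] y_n; rewrite [iota 0 _]/= perm_cons -cat_cons.
  apply: perm_cat_iota => [|x|x /gt_H //]; first by rewrite -ltnS.
  by rewrite inE => /orP [/eqP -> // | /lt_L /ltnW]; rewrite add1n ltnS.
rewrite !mem_filter !mem_permutations perm_split.
case pL: (perm_eq (y :: L) _); last by rewrite !andbF.
case pH: (perm_eq H _); last by rewrite !andbF.
have pW : perm_eq (0 :: y :: L ++ H) (iota 0 n) by rewrite perm_split pL pH.
have uW : uniq (0 :: y :: L ++ H) by rewrite (perm_uniq pW) iota_uniq.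
have nL : L != [::] by apply: contraTneq y_gt1 => eL; rewrite -(size_iota 1 y) -(perm_size pL) eL.
have mid_L : {in L, forall x, 0 < x < y}.
  move=> x xL; rewrite lt_L // andbT; have := perm_mem pL x.
  by rewrite inE xL orbT mem_iota => /esym /andP [].
have -> : min_first (0 :: y :: L ++ H) by apply/allP.
have -> : max_first (y :: L) by apply/allP => x; rewrite inE => /orP [/eqP -> // | /lt_L /ltnW].
have -> : cyc_occb (0 :: y :: L ++ H) = [|| cyc_occb (y :: L), ~~ max_first H | cyc_occb H].
  have split_occ := cyc_occ_min_split uW nL mid_L gt_H.
  apply/idP/idP => [/cyc_occP/split_occ [/cyc_occP -> | -> | /cyc_occP ->] | ]; rewrite ?orbT //.
  case/or3P => [/cyc_occP h | h | /cyc_occP h]; apply/cyc_occP/split_occ;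
    [exact: Or31 | exact: Or32 | exact: Or33].
by rewrite !negb_or negbK /= !andbT andbA.
Qed.

Lemma count_av_min_second_one n : 1 < n ->
  count (fun w => nth 0 w 1 == 1) (av_min 0 n) = size (av_min 1 n.-1).
Proof.
move=> n_gt1; rewrite -size_filter; symmetry.
apply: (uniq_size_bij (f := cons 0)); rewrite ?filter_uniq ?permutations_uniq //.
- by move=> t1 t2 _ _ [].
- move=> t; rewrite -(av_min_second_one t n_gt1) => /andP [t_in h1].
  by rewrite mem_filter /= nth0 h1.
move=> w; rewrite mem_filter => /andP [w1 ww].
case: n n_gt1 ww => [//|n] n_gt1 ww; have ew := av_min_cons0 ww.
rewrite ew /= nth0 in w1; apply/mapP; exists (behead w) => //.
by rewrite -av_min_second_one // -ew ww w1.
Qed.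

Lemma count_av_min_second n y : 1 < y < n ->
  count (fun w => nth 0 w 1 == y) (av_min 0 n) = size (av_max 1 y) * size (av_max y.+1 (n.-1 - y)).
Proof.
move=> y_in; have y_gt0 : 0 < y by case/andP: y_in => /ltnW.
have gt_H z : z \in av_max y.+1 (n.-1 - y) -> {in z, forall u, y < u}.
  rewrite mem_filter mem_permutations => /andP [_ /perm_mem pz] u.
  by rewrite pz mem_iota => /andP [].
rewrite -size_filter -(size_allpairs (fun x z => 0 :: x ++ z)); symmetry.
apply/perm_size/uniq_perm; rewrite ?filter_uniq ?permutations_uniq //.
  apply: allpairs_uniq; rewrite ?filter_uniq ?permutations_uniq //.
  move=> [x1 z1] [x2 z2] /allpairsP [[? ?] [x1_in _ [-> ->]]].
  move=> /allpairsP [[? ?] [x2_in _ [-> ->]]] /= [/eqP].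
  by rewrite eqseq_cat ?(size_av_max x1_in) ?(size_av_max x2_in) // => /andP [/eqP -> /eqP ->].
move=> w; apply/allpairsP/idP => [[[x z] /= [x_in z_in ->]] | ].
  have [ex lt_L] := av_max_cons y_gt0 x_in.
  rewrite mem_filter ex /= eqxx av_min_second //; last exact: gt_H.
  by rewrite -ex x_in.
rewrite mem_filter => /andP [/eqP w1 w_in].
case: n y_in w_in gt_H => [/andP [] //|n] y_in w_in gt_H.
have [t ew] : exists t, w = 0 :: y :: t.
  move: w1; rewrite (av_min_cons0 w_in); case: (behead w) => [|y' t] /= e.
    by move: y_in; rewrite -e.
  by exists t; rewrite e.
move: (w_in); rewrite ew mem_filter mem_permutations => /andP [/andP [_ /cyc_occP avoid] pw].
have uW : uniq (0 :: y :: t) by rewrite (perm_uniq pw) iota_uniq.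
have gt0 : {in y :: t, forall x, 0 < x}.
  by move=> x xt; rewrite lt0n; apply: contraNneq (proj1 (andP uW)) => <-.
have et := avoid_min_split uW gt0 avoid.
have lt_L : {in filter (fun x => x < y) t, forall x, x < y}.
  by move=> x; rewrite mem_filter => /andP [].
have gt_H' : {in filter (fun x => y < x) t, forall x, y < x}.
  by move=> x; rewrite mem_filter => /andP [].
have := w_in; rewrite ew {1}et av_min_second // => /andP [L_in H_in].
by exists (y :: filter (fun x => x < y) t, filter (fun x => y < x) t); split; last rewrite {1}et.
Qed.

Definition num_av n := size (av_min 0 n).

Lemma num_av_rec n : 1 < n ->
  num_av n = num_av n.-1 + \sum_(2 <= y < n) num_av y * num_av (n.-1 - y).
Proof.
move=> n_gt1; rewrite /num_av (size_sum_count (g := fun w => nth 0 w 1) (lo := 1) (hi := n)).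
  rewrite big_ltn // count_av_min_second_one // size_av_min_shift; congr (_ + _).
  apply: eq_big_nat => y y_in.
  by rewrite count_av_min_second // !size_av_max_shift -!size_av_min_max.
case: n n_gt1 => [//|n] n_gt1 w w_in; have ew := av_min_cons0 w_in.
move: w_in; rewrite mem_filter mem_permutations => /andP [_ pw].
have sw : size w = n.+1 by rewrite (perm_size pw) size_iota.
have y_n : nth 0 w 1 < n.+1.
  by have := perm_mem pw (nth 0 w 1); rewrite mem_nth ?sw // mem_iota => /esym /andP [].
have : nth 0 w 1 != nth 0 w 0 by rewrite nth_uniq ?sw // (perm_uniq pw) iota_uniq.
by rewrite y_n andbT lt0n {2}ew.
Qed.

Lemma num_av_small k : k < 4 -> num_av k = count min_first (permutations (iota 0 k)).
Proof.
move=> k_lt4; rewrite /num_av /av_min -size_filter; congr size; apply: eq_in_filter => w.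
rewrite mem_permutations => /perm_size; rewrite size_iota => sw.
suff -> : cyc_occb w = false by rewrite andbT.
by apply/negbTE/negP => /cyc_occP /cyc_occ_size; rewrite sw; lia.
Qed.

Lemma num_av_rec_sym n :
  num_av n.+3 = 2 * num_av n.+2 + \sum_(1 <= k < n.+1) num_av k * num_av (n.+2 - k).
Proof.
rewrite num_av_rec //= big_nat_recr //= subnn (num_av_small (isT : 0 < 4)) /= muln1.
rewrite big_nat_rev big_add1 /=.
have -> : \sum_(1 <= i < n.+1) num_av (n.+4 - i.+2) * num_av (n.+2 - (n.+4 - i.+2)) =
          \sum_(1 <= k < n.+1) num_av k * num_av (n.+2 - k).
  apply: eq_big_nat => k /andP [_ k_n]; rewrite mulnC.
  by congr (num_av _ * num_av _); lia.
lia.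
Qed.

Theorem theorem5p5 (D : nat -> nat) :
  D 1 = 2 -> D 2 = 1 -> D 3 = 1 ->
  (forall m, 4 <= m -> D m = \sum_(1 <= k < m - 2) D k * D (m - k)) ->
  forall n, 1 <= n -> #|Av n| = D n.+1.
Proof.
move=> D1 D2 D3 D_rec [//|n] _; rewrite card_Av -/(num_av n.+1).
elim/ltn_ind: n => -[|[|n]] IH; [by rewrite D2 num_av_small | by rewrite D3 num_av_small |].
have IH' j : 0 < j < n.+3 -> D j.+1 = num_av j.
  by case: j => [//|j] /andP [_ j_n]; rewrite IH.
rewrite num_av_rec_sym D_rec // !subSS subn0 [in RHS]big_ltn // D1 !subSS subn0 IH' ?ltnSn //.
rewrite [in RHS]big_add1 /=; congr (_ + _).
apply: eq_big_nat => k /andP [k_gt0 k_n].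
rewrite IH' ?k_gt0 ?(ltn_trans k_n) //; congr (_ * _).
by rewrite (_ : n.+4 - k.+1 = (n.+2 - k).+1) ?IH' //; lia.
Qed.
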